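(* Let $\mathcal{K}$ be a continuous unitary representation of $\overline{\mathfrak{S}}_\infty$ in a Hilbert space $\mathcal{H}$, let $n\ge 0$ and $k\ge 1$ be integers, let $P_n$ be the weak-operator limit of $\mathcal{K}({}^n\sigma_m)$ as $m\to\infty$, and let $O_k$ be the weak-operator limit of $\mathcal{K}((k\;\;N))$ as $N\to\infty$. Then $P_nO_k=O_kP_n$.
   Context: $\overline{\mathfrak{S}}_\infty$ is the group of all bijections of $\mathbb{N}$, with the Polish topology in which the subgroups $\mathfrak{S}(n,\infty)=\{s: s(j)=j \text{ for } j=1,\dots,n\}$ form a fundamental system of neighborhoods of the identity; continuity of $\mathcal{K}$ means $\lim_{n\to\infty}\sup_{s\in\mathfrak{S}(n,\infty)}\|\mathcal{K}(s)\eta-\eta\|=0$ for each $\eta\in\mathcal{H}$. $(k\;j)$ denotes the transposition of $k$ and $j$, and ${}^n\sigma_m=(n+1\;\;n+m+1)(n+2\;\;n+m+2)\cdots(n+m\;\;n+2m)$. Both weak-operator limits $P_n$ and $O_k$ exist and are self-adjoint projections. *)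

From HB Require Import structures.
From mathcomp Require Import all_boot all_order all_algebra.
From mathcomp Require Import reals complex.
Set Implicit Arguments. Unset Strict Implicit. Unset Printing Implicit Defensive.
Import Order.TTheory GRing.Theory Num.Theory.
Local Open Scope ring_scope.

Record hilbert_space (R : realType) (H : lmodType R[i]) := HilbertSpace {
  ip : H -> H -> R[i];
  ipDl : forall (a : R[i]) (x y z : H), ip (a *: x + y) z = a * ip x z + ip y z;
  ip_conj : forall x y : H, ip y x = (ip x y)^*;
  ip_ge0 : forall x : H, 0 <= ip x x;
  ip_eq0 : forall x : H, ip x x = 0 -> x = 0;
  ip_complete : forall u : nat -> H,
    (forall e : R[i], 0 < e -> exists N : nat, forall m p : nat,
        (N <= m)%N -> (N <= p)%N -> sqrtC (ip (u m - u p) (u m - u p)) < e) ->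
    exists l : H, forall e : R[i], 0 < e -> exists N : nat, forall m : nat,
        (N <= m)%N -> sqrtC (ip (u m - l) (u m - l)) < e
}.

Definition hnorm (R : realType) (H : lmodType R[i]) (HS : hilbert_space H)
  (x : H) : R[i] := sqrtC (ip HS x x).

(* The set N = {1,2,3,...} is encoded as the positive elements of nat;
   a bijection of N is encoded as a bijection of nat fixing the dummy point 0. *)
Definition Sinf (s : nat -> nat) : Prop := bijective s /\ s 0%N = 0%N.

Definition in_S_n_inf (n : nat) (s : nat -> nat) : Prop :=
  Sinf s /\ forall j : nat, (1 <= j <= n)%N -> s j = j.

Definition transp (k j : nat) : nat -> nat :=
  fun x => if x == k then j else if x == j then k else x.

(* ^n sigma_m = (n+1 n+m+1)(n+2 n+m+2)...(n+m n+2m) *)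
Definition nsigma (n m : nat) : nat -> nat :=
  fun x => if (n < x <= n + m)%N then (x + m)%N
           else if (n + m < x <= n + m + m)%N then (x - m)%N else x.

Record unitary_rep (R : realType) (H : lmodType R[i]) (HS : hilbert_space H)
    (K : (nat -> nat) -> H -> H) : Prop := {
  rep_linear : forall s, Sinf s -> forall (a : R[i]) (x y : H),
      K s (a *: x + y) = a *: K s x + K s y;
  rep_isometry : forall s, Sinf s -> forall x y : H, ip HS (K s x) (K s y) = ip HS x y;
  rep_surj : forall s, Sinf s -> forall y : H, exists x : H, K s x = y;
  rep_id : forall x : H, K id x = x;
  rep_mul : forall s t, Sinf s -> Sinf t -> forall x : H, K (s \o t) x = K s (K t x);
  rep_cont : forall (eta : H) (e : R[i]), 0 < e -> exists n0 : nat,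
      forall n : nat, (n0 <= n)%N -> forall s, in_S_n_inf n s ->
        hnorm HS (K s eta - eta) < e
}.

Definition cvgC (R : realType) (c : nat -> R[i]) (l : R[i]) : Prop :=
  forall e : R[i], 0 < e -> exists N : nat, forall m : nat, (N <= m)%N -> `|c m - l| < e.

Definition weak_limit (R : realType) (H : lmodType R[i]) (HS : hilbert_space H)
    (T : nat -> H -> H) (P : H -> H) : Prop :=
  forall x y : H, cvgC (fun m => ip HS (T m x) y) (ip HS (P x) y).

From mathcomp Require Import all_boot all_order all_algebra.
From mathcomp Require Import reals complex.
From Stdlib Require Import FunctionalExtensionality.
From mathcomp Require Import ring zify.
Set Implicit Arguments. Unset Strict Implicit. Unset Printing Implicit Defensive.
Import Order.TTheory GRing.Theory Num.Theory.
Local Open Scope ring_scope.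

(* Both limits are weak limits of self-adjoint unitaries, hence self-adjoint.
   If k <= n, then (k N) commutes with ^n sigma_m as soon as N > n + 2m, so
   passing to the weak limit in N shows that O commutes with each
   K(^n sigma_m), and passing to the limit in m that O commutes with P.
   If k > n and N > n, then for m large (k N) ^n sigma_m = ^n sigma_m (k+m N+m),
   where the last factor fixes 1, ..., m; by continuity of K both sides have
   the weak limit P as m -> oo, so K((k N)) P = P.  Hence O P = P, and taking
   adjoints P O = P = O P. *)

Section ComplexSequences.
Variable R : realType.
Implicit Types (c d : nat -> R[i]) (l : R[i]).

Lemma cvgC_cst l : cvgC (fun=> l) l.
Proof. by move=> e e_gt0; exists 0%N => m _; rewrite subrr normr0. Qed.

Lemma cvgC_unique c d l1 l2 : cvgC c l1 -> cvgC d l2 ->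
  (exists N, forall m, (N <= m)%N -> c m = d m) -> l1 = l2.
Proof.
move=> cl1 dl2 [N cd]; apply/eqP; rewrite -subr_eq0 -normr_eq0.
apply: contraT => l12_neq0.
have l12_gt0 : 0 < `|l1 - l2| by rewrite lt_def l12_neq0 normr_ge0.
have half_gt0 : 0 < `|l1 - l2| / 2 by rewrite divr_gt0.
have [N1 h1] := cl1 _ half_gt0; have [N2 h2] := dl2 _ half_gt0.
pose m := (N + N1 + N2)%N.
have := h1 m (leq_trans (leq_addl N N1) (leq_addr _ _)).
rewrite (cd m (leq_trans (leq_addr N1 N) (leq_addr _ _))) => dl1.
have dl2m := h2 m (leq_addl _ _).
have : `|l1 - l2| < `|l1 - l2| / 2 + `|l1 - l2| / 2.
  by apply: le_lt_trans (ler_distD (d m) l1 l2) _; rewrite distrC ltrD.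
by rewrite -splitr ltxx.
Qed.

Lemma cvgC_conj c l : cvgC c l -> cvgC (fun m => (c m)^*) l^*.
Proof.
move=> cl e e_gt0; have [N hN] := cl e e_gt0; exists N => m le_Nm.
by rewrite -rmorphB norm_conjC hN.
Qed.

Lemma cvgC_perturb c d l :
  cvgC c l -> cvgC (fun m => d m - c m) 0 -> cvgC d l.
Proof.
move=> cl dc0 e e_gt0.
have half_gt0 : 0 < e / 2 by rewrite divr_gt0.
have [N1 h1] := cl _ half_gt0; have [N2 h2] := dc0 _ half_gt0.
exists (N1 + N2)%N => m le_Nm.
apply: le_lt_trans (ler_distD (c m) (d m) l) _.
rewrite (splitr e) ltrD //.
  by rewrite -[d m - c m]subr0 h2 // (leq_trans (leq_addl _ _) le_Nm).
by rewrite h1 // (leq_trans (leq_addr _ _) le_Nm).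
Qed.

End ComplexSequences.

Section InnerProduct.
Variables (R : realType) (H : lmodType R[i]) (HS : hilbert_space H).
Local Notation ip := (ip HS).

Lemma ip0l z : ip 0 z = 0.
Proof.
have := ipDl HS 1 0 0 z; rewrite scale1r addr0 mul1r.
by move/(congr1 (fun t => t - ip 0 z)); rewrite addrK subrr.
Qed.

Lemma ipZl a x z : ip (a *: x) z = a * ip x z.
Proof. by have := ipDl HS a x 0 z; rewrite addr0 ip0l addr0. Qed.

Lemma ipBl x y z : ip (x - y) z = ip x z - ip y z.
Proof. by rewrite -scaleN1r [x + _]addrC ipDl mulN1r addrC. Qed.

Lemma ipZr a x y : ip x (a *: y) = a^* * ip x y.
Proof. by rewrite [LHS]ip_conj ipZl rmorphM [ip x y]ip_conj. Qed.

Lemma ipBr x y z : ip x (y - z) = ip x y - ip x z.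
Proof. by rewrite [LHS]ip_conj ipBl rmorphB [ip x y]ip_conj [ip x z]ip_conj. Qed.

Lemma ip_ext u v : (forall y, ip u y = ip v y) -> u = v.
Proof.
move=> e; apply/eqP; rewrite -subr_eq0; apply/eqP; apply: (ip_eq0 (h:=HS)).
by rewrite ipBl e subrr.
Qed.

(* Cauchy-Schwarz, weakened by [+ 1] so that no case split on [y = 0] is needed:
   expand [0 <= ip (u - t B y) (u - t B y)] with [t = (ip y y + 1)^-1]. *)
Lemma ip_normr_sqr_le u y : `|ip u y| ^+ 2 <= ip u u * (ip y y + 1).
Proof.
set A := ip u u; set B := ip u y; set C := ip y y; set b := `|B| ^+ 2.
have C_ge0 : 0 <= C := ip_ge0 HS y.
have C1_gt0 : 0 < C + 1 by rewrite ltr_wpDl.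
pose t : R[i] := (C + 1)^-1.
have t_gt0 : 0 < t by rewrite invr_gt0.
have tC1 : t * (C + 1) = 1 by rewrite mulVf ?gt_eqF.
have tC_le1 : t * C <= 1 by rewrite -tC1 mulrDr mulr1 lerDl ltW.
have expand : ip (u - (t * B) *: y) (u - (t * B) *: y)
              = A - t * b - t * b + t * b * (t * C).
  have conjM (a c : R[i]) : (a * c)^* = a^* * c^* by exact: rmorphM.
  rewrite ipBl !ipBr !ipZl !ipZr conjM (geC0_conj (ltW t_gt0)).
  by rewrite [ip y u]ip_conj /b normCK -/A -/B -/C; move: (B^*) => B'; ring.
have tb_le : t * b <= A.
  have tb_ge0 : 0 <= t * b by apply: mulr_ge0 (ltW t_gt0) _; apply: exprn_ge0.
  rewrite -subr_ge0; apply: le_trans (ip_ge0 HS (u - (t * B) *: y)) _.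
  by rewrite expand -addrA gerDl addrC subr_le0 ler_piMr.
have -> : b = t * b * (C + 1) by rewrite mulrAC tC1 mul1r.
by rewrite ler_pM2r.
Qed.

Lemma ip_small_l y e : 0 < e ->
  exists2 d, 0 < d & forall u, ip u u < d -> `|ip u y| < e.
Proof.
move=> e_gt0; have y1_gt0 : 0 < ip y y + 1 by rewrite ltr_wpDl // ip_ge0.
exists (e ^+ 2 / (ip y y + 1)) => [|u small_u]; first by rewrite divr_gt0 ?exprn_gt0.
have : `|ip u y| ^+ 2 < e ^+ 2.
  by apply: le_lt_trans (ip_normr_sqr_le u y) _; rewrite -ltr_pdivlMr.
by rewrite ltr_pXn2r // nnegrE ?normr_ge0 // ltW.
Qed.

Definition selfadjoint (A : H -> H) := forall x y, ip (A x) y = ip x (A y).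

Section WeakLimit.
Variables (T : nat -> H -> H) (P : H -> H).
Hypothesis TP : weak_limit HS T P.

Lemma weak_limit_selfadjoint :
  (exists N, forall m, (N <= m)%N -> selfadjoint (T m)) -> selfadjoint P.
Proof.
move=> [N TN_sa] x y; rewrite [RHS]ip_conj.
apply: cvgC_unique (TP x y) (cvgC_conj (TP y x)) _.
by exists N => m le_Nm; rewrite TN_sa // ip_conj.
Qed.

Lemma weak_limit_commute A : selfadjoint A ->
  (exists N, forall m, (N <= m)%N -> forall x, A (T m x) = T m (A x)) ->
  forall x, P (A x) = A (P x).
Proof.
move=> A_sa [N AT] x; apply: ip_ext => y; rewrite A_sa.
apply: cvgC_unique (TP (A x) y) (TP x (A y)) _.
by exists N => m le_Nm; rewrite -AT // A_sa.
Qed.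

Lemma weak_limit_fixed v :
  (exists N, forall m, (N <= m)%N -> T m v = v) -> P v = v.
Proof.
move=> [N Tv]; apply: ip_ext => y.
apply: cvgC_unique (TP v y) (cvgC_cst _) _.
by exists N => m le_Nm; rewrite Tv.
Qed.

End WeakLimit.

Lemma selfadjoint_commute A B : selfadjoint A -> selfadjoint B ->
  (forall x, A (B x) = B x) -> forall x, B (A x) = A (B x).
Proof.
move=> A_sa B_sa AB x; apply: ip_ext => y.
by rewrite B_sa A_sa !AB B_sa.
Qed.

End InnerProduct.

Section Permutations.
Implicit Types (n m k N j : nat) (s : nat -> nat).

Lemma nsigmaK n m : involutive (nsigma n m).
Proof. by move=> x; rewrite /nsigma; do ![case: ifP]; lia. Qed.

Lemma transpK k N : involutive (transp k N).
Proof. by move=> x; rewrite /transp; do ![case: ifP]; lia. Qed.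

Lemma transp_id k N j : j != k -> j != N -> transp k N j = j.
Proof. by rewrite /transp; do ![case: ifP]; lia. Qed.

Lemma Sinf_involutive s : involutive s -> s 0%N = 0%N -> Sinf s.
Proof. by move=> sK s0; split=> //; exists s. Qed.

Lemma Sinf_nsigma n m : Sinf (nsigma n m).
Proof. by apply: Sinf_involutive (nsigmaK n m) _; rewrite /nsigma !ltn0. Qed.

Lemma Sinf_transp k N : (0 < k)%N -> (0 < N)%N -> Sinf (transp k N).
Proof.
by move=> k_gt0 N_gt0; apply: Sinf_involutive (transpK k N) _; rewrite transp_id; lia.
Qed.

Lemma S_n_inf_transp m k N : (0 < k)%N -> (0 < N)%N ->
  in_S_n_inf m (transp (k + m) (N + m)).
Proof.
move=> k_gt0 N_gt0; split; first by apply: Sinf_transp; lia.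
by move=> j j_le_m; rewrite transp_id; lia.
Qed.

Lemma nsigma_transp_comm n m k N : (k <= n)%N -> (n + m + m < N)%N ->
  nsigma n m \o transp k N = transp k N \o nsigma n m.
Proof.
move=> le_kn lt_N; apply: functional_extensionality => x /=.
by rewrite /nsigma /transp; do ![case: ifP]; lia.
Qed.

Lemma transp_nsigma n m k N : (n < k <= n + m)%N -> (n < N <= n + m)%N ->
  transp k N \o nsigma n m = nsigma n m \o transp (k + m) (N + m).
Proof.
move=> k_mid N_mid; apply: functional_extensionality => x /=.
by rewrite /nsigma /transp; do ![case: ifP]; lia.
Qed.

End Permutations.

Section Representation.
Variables (R : realType) (H : lmodType R[i]) (HS : hilbert_space H).
Variables (K : (nat -> nat) -> H -> H) (hK : unitary_rep HS K).

Lemma rep_selfadjoint s : Sinf s -> involutive s -> selfadjoint HS (K s).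
Proof.
move=> Ss sK a b; rewrite -(rep_isometry hK Ss a (K s b)) -(rep_mul hK Ss Ss).
have -> : s \o s = id by apply: functional_extensionality.
by rewrite (rep_id hK).
Qed.

Lemma rep_subr s : Sinf s -> forall a b, K s (a - b) = K s a - K s b.
Proof.
move=> Ss a b; have := rep_linear hK Ss (-1) b a.
by rewrite !scaleN1r addrC [X in _ = X -> _]addrC => <-.
Qed.

Lemma rep_comp_eq s t s' t' : Sinf s -> Sinf t -> Sinf s' -> Sinf t' ->
  s \o t = s' \o t' -> forall x, K s (K t x) = K s' (K t' x).
Proof. by move=> Ss St Ss' St' st x; rewrite -(rep_mul hK) // st (rep_mul hK). Qed.

(* Continuity: [K (s m) -> id] strongly when [s m] fixes [1, ..., m], and
   the unitaries [K (t m)] cannot amplify the error. *)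
Lemma weak_limit_rep_mulr (t s : nat -> nat -> nat) (P : H -> H) :
  weak_limit HS (fun m => K (t m)) P -> (forall m, Sinf (t m)) ->
  (forall m, in_S_n_inf m (s m)) ->
  forall z y, cvgC (fun m => ip HS (K (t m) (K (s m) z)) y) (ip HS (P z) y).
Proof.
move=> tP St Ss z y; apply: cvgC_perturb (tP z y) _ => e e_gt0.
have [d d_gt0 small] := ip_small_l HS y e_gt0.
have sqrt_d_gt0 : 0 < sqrtC d by rewrite sqrtC_gt0.
have [n0 near_id] := rep_cont hK z sqrt_d_gt0.
exists n0 => m le_n0m; rewrite subr0 -ipBl -rep_subr //; apply: small.
rewrite (rep_isometry hK (St m)).
by have := near_id m le_n0m _ (Ss m); rewrite /hnorm ltr_sqrtC // nnegrE ?ip_ge0 // ltW.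
Qed.

Section Limits.
Variables (n k : nat) (k_gt0 : (0 < k)%N) (P O : H -> H).
Hypothesis hP : weak_limit HS (fun m => K (nsigma n m)) P.
Hypothesis hO : weak_limit HS (fun N => K (transp k N)) O.

Lemma P_selfadjoint : selfadjoint HS P.
Proof.
apply: weak_limit_selfadjoint hP _; exists 0%N => m _.
exact: rep_selfadjoint (Sinf_nsigma n m) (nsigmaK n m).
Qed.

Lemma O_selfadjoint : selfadjoint HS O.
Proof.
apply: weak_limit_selfadjoint hO _; exists 1%N => N N_gt0.
exact: rep_selfadjoint (Sinf_transp k_gt0 N_gt0) (transpK k N).
Qed.

Lemma O_rep_nsigma_comm m : (k <= n)%N ->
  forall x, O (K (nsigma n m) x) = K (nsigma n m) (O x).
Proof.
move=> le_kn.
apply: (weak_limit_commute hO (rep_selfadjoint (Sinf_nsigma n m) (nsigmaK n m))).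
exists (n + m + m).+1 => N lt_N x.
apply: rep_comp_eq; [exact: Sinf_nsigma | apply: Sinf_transp; lia
  | apply: Sinf_transp; lia | exact: Sinf_nsigma | exact: nsigma_transp_comm].
Qed.

Lemma rep_transp_P N z : (n < k)%N -> (n < N)%N -> K (transp k N) (P z) = P z.
Proof.
move=> lt_nk lt_nN; have N_gt0 : (0 < N)%N by lia.
have S_kN := Sinf_transp k_gt0 N_gt0.
apply: (ip_ext (HS:=HS)) => y; rewrite (rep_selfadjoint S_kN (transpK k N)).
apply: cvgC_unique (hP z _) (weak_limit_rep_mulr hP (Sinf_nsigma n)
  (fun m => S_n_inf_transp m k_gt0 N_gt0) z y) _.
exists (k + N)%N => m le_m.
rewrite -(rep_selfadjoint S_kN (transpK k N)); congr (ip HS _ y).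
apply: rep_comp_eq; [exact: S_kN | exact: Sinf_nsigma | exact: Sinf_nsigma
  | apply: Sinf_transp; lia | apply: transp_nsigma; lia].
Qed.

Lemma O_P (lt_nk : (n < k)%N) z : O (P z) = P z.
Proof. by apply: (weak_limit_fixed hO); exists n.+1 => N; exact: rep_transp_P. Qed.

End Limits.
End Representation.

Theorem lemma5 (R : realType) (H : lmodType R[i]) (HS : hilbert_space H)
  (K : (nat -> nat) -> H -> H) (hK : unitary_rep HS K)
  (n k : nat) (hk : (1 <= k)%N) (P O : H -> H)
  (hP : weak_limit HS (fun m => K (nsigma n m)) P)
  (hO : weak_limit HS (fun N => K (transp k N)) O) :
  P \o O = O \o P.
Proof.
apply: functional_extensionality => x /=.
have O_sa := O_selfadjoint hK hk hO.
case: (leqP k n) => [le_kn | lt_nk].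
- apply: (weak_limit_commute hP O_sa); exists 0%N => m _.
  exact (O_rep_nsigma_comm hK hk hO m le_kn).
- exact (selfadjoint_commute O_sa (P_selfadjoint hK hP) (O_P hK hk hP hO lt_nk) x).
Qed.
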